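(* Let $(M,\omega_0)$, $\chi$, $\Gamma$, $f$ be as in the context, with the Standing Assumption in force, and let $\Gamma_n=\{\lambda\in\mathbb{R}^n:\lambda_i>0\ \forall i\}$. For every $C_0>0$ and every $x\in M$ the set $$\{\lambda'\in\Gamma:\ f(\lambda')\le C_0,\ \lambda'-\lambda[\chi](x)\in\Gamma_n\}$$ is bounded, and its diameter can be bounded, uniformly in $x\in M$, in terms of $f$, $C_0$, $\chi$ and the metric $g$.
   Context: $(M,\omega_0)$ is a compact complex manifold without boundary of complex dimension $n$ with Hermitian metric $\omega_0=\sqrt{-1}g_{i\bar j}dz_i\wedge d\bar z_j$. $\chi$ is a smooth real $(1,1)$-form; $\lambda[\chi](x)$ is the unordered $n$-tuple of eigenvalues of $g^{i\bar k}\chi_{j\bar k}$ at $x$. $\Gamma\subset\mathbb{R}^n$ is a closed convex permutation-symmetric cone containing $\Gamma_n$, contained in $\{\sum\lambda_i\ge0\}$ with $\mathrm{Int}\,\Gamma\subset\{\sum\lambda_i>0\}$; $f$ smooth symmetric on $\Gamma$. Standing Assumption: (i) $\partial f/\partial\lambda_i>0$, $f$ concave, $f>0$ in $\mathrm{Int}\,\Gamma$, $f=0$ on $\partial\Gamma$; (ii) $\lambda[\chi](x)\in\mathrm{Int}\,\Gamma$ for all $x$; (iii) $f$ positively homogeneous of degree 1 with $f(\lambda)\ge c_0(\prod\lambda_i)^{1/n}$ on $\Gamma_n$, some $c_0>0$. *)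

From HB Require Import structures.
From mathcomp Require Import all_boot all_order all_algebra all_fingroup.
From mathcomp Require Import all_classical all_reals all_analysis.
Set Implicit Arguments. Unset Strict Implicit. Unset Printing Implicit Defensive.
Import Order.TTheory GRing.Theory Num.Theory.
Import numFieldNormedType.Exports.
Local Open Scope classical_set_scope.
Local Open Scope ring_scope.

Definition Gamma_n (R : realType) (n : nat) : set 'rV[R]_n :=
  [set l | forall i : 'I_n, 0 < l ord0 i].

Definition perm_row (R : realType) (n : nat) (s : 'S_n) (l : 'rV[R]_n) : 'rV[R]_n :=
  \row_i l ord0 (s i).

(* the unordered n-tuple of coordinates (as a sequence) *)
Definition coords (R : realType) (n : nat) (l : 'rV[R]_n) : seq R :=
  [seq l ord0 i | i <- enum 'I_n].

Definition evec (R : realType) (n : nat) (i : 'I_n) : 'rV[R]_n := delta_mx ord0 i.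

Definition admissible_cone (R : realType) (n : nat) (G : set 'rV[R]_n) : Prop :=
  closed G
  /\ (forall a b t, G a -> G b -> 0 <= t -> t <= 1 -> G (t *: a + (1 - t) *: b))
  /\ (forall a t, G a -> 0 <= t -> G (t *: a))
  /\ (forall (s : 'S_n) a, G a -> G (perm_row s a))
  /\ (@Gamma_n R n `<=` G)
  /\ (forall a, G a -> 0 <= \sum_i a ord0 i)
  /\ (forall a, interior G a -> 0 < \sum_i a ord0 i).

(* Standing Assumption (i) and (iii) on f, plus "f symmetric on Gamma";
   smoothness is rendered as: continuous on Gamma, differentiable on Int Gamma. *)
Definition admissible_f (R : realType) (n : nat) (G : set 'rV[R]_n)
    (f : 'rV[R]_n -> R) (c0 : R) : Prop :=
  {within G, continuous f}
  /\ (forall (s : 'S_n) a, G a -> f (perm_row s a) = f a)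
  /\ (forall a, interior G a -> differentiable f a /\
          forall i : 'I_n, 0 < 'D_(@evec R n i) f a)
  /\ (forall a b t, G a -> G b -> 0 <= t -> t <= 1 ->
          t * f a + (1 - t) * f b <= f (t *: a + (1 - t) *: b))
  /\ (forall a, interior G a -> 0 < f a)
  /\ (forall a, G a -> ~ interior G a -> f a = 0)
  /\ (forall a t, G a -> 0 < t -> f (t *: a) = t * f a)
  /\ 0 < c0
  /\ (forall a, @Gamma_n R n a -> c0 * ((\prod_i a ord0 i) `^ (n%:R^-1)) <= f a).

From HB Require Import structures.
From mathcomp Require Import all_boot all_order all_algebra all_fingroup.
From mathcomp Require Import all_classical all_reals all_analysis.
From mathcomp Require Import ring lra.
Import Order.TTheory GRing.Theory Num.Theory.
Import numFieldNormedType.Exports.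
Local Open Scope classical_set_scope.
Local Open Scope ring_scope.

(* Compactness of M gives one e > 0 with lam x - e*1 in Gamma for every x, and
   the same holds for every permutation l of lam x.  A point a of the sublevel
   set with a - l in Gamma_n splits as a = (l - e*1) + d with d_j > e for all j.
   Concavity and homogeneity make f superadditive and f >= 0 on Gamma, so
   c0 (prod_j d_j)^(1/n) <= f d <= f a <= C0; with d_j > e this caps d_i, hence
   l_i < a_i <= l_i + (C0/c0)^n / e^(n-1), an interval whose length does not
   depend on x. *)

Lemma perm_eq_coords_perm_row {R : realType} {n} {u v : 'rV[R]_n} :
  perm_eq (coords u) (coords v) -> exists s : 'S_n, u = perm_row s v.
Proof.
have coordsE (w : 'rV[R]_n) : coords w = val [tuple w ord0 i | i < n].
  by rewrite /coords /= enumT unlock.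
rewrite !coordsE => /tuple_permP [s /val_inj uv]; exists s; apply/rowP => i.
by have := congr1 (fun t => tnth t i) uv; rewrite !tnth_mktuple mxE.
Qed.

Lemma compact_uniform_ball {R : numFieldType} {T : pseudoMetricType R}
    {K G : set T} :
  compact K -> K `<=` G° -> exists2 e : R, 0 < e & forall x, K x -> ball x e `<=` G.
Proof.
move=> /compact_near_coveringP cK KG.
have /cK : forall x, K x -> \forall y \near x & e \near (0 : R)^'+, ball y e `<=` G.
  move=> x /KG /nbhs_ballP [r /= r0 xrG].
  have r20 : 0 < r / 2 by rewrite divr_gt0.
  exists (ball x (r / 2), [set e | e < r / 2]).
    by split; [exact: nbhsx_ballx | exact: nbhs_right_lt].
  move=> [y e] /= [xy er] z yz; apply: xrG.
  apply: le_ball (ball_triangle xy yz).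
  by rewrite [leRHS](splitr r) lerD2l ltW.
by move=> /(filterI (nbhs_right_gt 0)) /filter_ex [e [e0 eK]]; exists e.
Qed.

Lemma ball_subr_const_mx {R : realType} {n} (v : 'rV[R]_n) {e : R} :
  0 < e -> ball v e (v - const_mx (e / 2)).
Proof.
move=> e0; split=> // i j; rewrite /ball /= !mxE opprB addrC subrK.
by rewrite gtr0_norm ?divr_gt0 // ltr_pdivrMr // ltr_pMr // ltr1n.
Qed.

Lemma root_le_exprn {R : realType} {n} {p q : R} :
  (0 < n)%N -> 0 <= p -> p `^ n%:R^-1 <= q -> p <= q ^+ n.
Proof.
move=> n0 p0 pq.
have -> : p = (p `^ n%:R^-1) ^+ n.
  by rewrite -powR_mulrn ?powR_ge0 // -powRrM mulVf ?powRr1 // pnatr_eq0 -lt0n.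
by rewrite lerXn2r // nnegrE ?(le_trans _ pq) ?powR_ge0.
Qed.

Lemma exprn_mul_le_prod {R : numDomainType} {n} {F : 'I_n -> R} {e} i :
  0 <= e -> (forall j, e <= F j) -> e ^+ n.-1 * F i <= \prod_j F j.
Proof.
move=> e0 eF; rewrite (bigD1 i) //= mulrC ler_wpM2l ?(le_trans e0) //.
rewrite -[n in n.-1]card_ord -(cardC1 i) -prodr_const.
by apply: ler_prod => j _; rewrite e0 eF.
Qed.

Section AdmissibleSublevel.
Context {R : realType} {n : nat} {G : set 'rV[R]_n} {f : 'rV[R]_n -> R} {c0 : R}.
Hypotheses (Gadm : admissible_cone G) (fadm : admissible_f G f c0).

Lemma admissible_f_ge0 {a} : G a -> 0 <= f a.
Proof.
have [_ [_ [_ [_ [fint [fbd _]]]]]] := fadm.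
move=> Ga; have [/fint/ltW //|notint] := pselect (G° a).
by rewrite fbd.
Qed.

Lemma admissible_f_superadditive {u v} : G u -> G v -> f u + f v <= f (u + v).
Proof.
have [_ [Gconv _]] := Gadm; have [_ [_ [_ [fconc [_ [_ [fhom _]]]]]]] := fadm.
move=> Gu Gv; have h2 : 1 - 2^-1 = 2^-1 :> R by field.
have uvE : u + v = 2 *: (2^-1 *: u + (1 - 2^-1) *: v).
  by rewrite h2 -scalerDr scalerA mulfV ?scale1r // pnatr_eq0.
have h0 : 0 <= 2^-1 :> R by rewrite invr_ge0 ler0n.
have h1 : 2^-1 <= 1 :> R by rewrite invf_le1 ?ler1n.
have := fconc u v _ Gu Gv h0 h1.
by rewrite uvE (fhom _ _ (Gconv _ _ _ Gu Gv h0 h1)) // h2; lra.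
Qed.

Lemma admissible_f_prod_le {d C} :
  (0 < n)%N -> Gamma_n d -> f d <= C -> \prod_j d ord0 j <= (C / c0) ^+ n.
Proof.
have [_ [_ [_ [_ [_ [_ [_ [c0_gt0 fc0]]]]]]]] := fadm.
move=> n0 dpos fdC; apply: root_le_exprn => //.
  by apply: prodr_ge0 => j _; exact/ltW.
by rewrite ler_pdivlMr // mulrC (le_trans (fc0 _ dpos)).
Qed.

Lemma admissible_f_sublevel_entry_le {l a e C} i :
  0 < e -> G (l - const_mx e) -> f a <= C -> Gamma_n (a - l) ->
  a ord0 i <= l ord0 i + (C / c0) ^+ n / e ^+ n.-1.
Proof.
have [_ [_ [_ [_ [GnG _]]]]] := Gadm.
move=> e0 Gle faC al; set d := a - l + const_mx e.
have de j : e <= d ord0 j by have := al j; rewrite !mxE; lra.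
have dpos : Gamma_n d by move=> j; exact: lt_le_trans e0 (de j).
have aE : a = (l - const_mx e) + d by apply/rowP => j; rewrite !mxE; ring.
have fdC : f d <= C.
  have := admissible_f_superadditive Gle (GnG _ dpos); rewrite -aE.
  by have := admissible_f_ge0 Gle; lra.
have di : d ord0 i <= (C / c0) ^+ n / e ^+ n.-1.
  rewrite ler_pdivlMr ?exprn_gt0 // mulrC.
  apply: le_trans (exprn_mul_le_prod i (ltW e0) de) _.
  exact: admissible_f_prod_le (leq_ltn_trans (leq0n _) (ltn_ord i)) dpos fdC.
by move: di; rewrite /d !mxE; lra.
Qed.

Lemma admissible_f_sublevel_dist {l a b e C} i :
  0 < e -> G (l - const_mx e) ->
  f a <= C -> Gamma_n (a - l) -> f b <= C -> Gamma_n (b - l) ->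
  `|a ord0 i - b ord0 i| <= (C / c0) ^+ n / e ^+ n.-1.
Proof.
move=> e0 Gle faC al fbC bl.
have := admissible_f_sublevel_entry_le i e0 Gle faC al.
have := admissible_f_sublevel_entry_le i e0 Gle fbC bl.
have := al i; have := bl i; rewrite !mxE ler_norml; lra.
Qed.

End AdmissibleSublevel.

Theorem lemma3p5 (R : realType) (n : nat) (M : topologicalType)
    (lam : M -> 'rV[R]_n) (G : set 'rV[R]_n) (f : 'rV[R]_n -> R) (c0 : R) :
  compact [set: M] ->
  continuous lam ->
  admissible_cone G ->
  admissible_f G f c0 ->
  (forall x, interior G (lam x)) ->
  forall C0 : R, 0 < C0 ->
  exists D : R, forall (x : M) (l0 : 'rV[R]_n),
    perm_eq (coords l0) (coords (lam x)) ->
    forall a b : 'rV[R]_n,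
      G a -> f a <= C0 -> @Gamma_n R n (a - l0) ->
      G b -> f b <= C0 -> @Gamma_n R n (b - l0) ->
      forall i : 'I_n, `|a ord0 i - b ord0 i| <= D.
Proof.
move=> cM lam_cont Gadm fadm lamG C0 _.
have [_ [_ [_ [Gperm _]]]] := Gadm.
have Kcompact : compact (lam @` [set: M]).
  exact/continuous_compact/cM/continuous_subspaceT.
have KG : lam @` [set: M] `<=` G° by move=> _ [x _ <-].
have [e e0 eG] := compact_uniform_ball Kcompact KG.
have e20 : 0 < e / 2 by rewrite divr_gt0.
exists ((C0 / c0) ^+ n / (e / 2) ^+ n.-1).
move=> x _ /perm_eq_coords_perm_row [s ->] a b _ faC al _ fbC bl i.
apply: (admissible_f_sublevel_dist Gadm fadm i e20 _ faC al fbC bl).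
have -> : perm_row s (lam x) - const_mx (e / 2) =
          perm_row s (lam x - const_mx (e / 2)).
  by apply/rowP => j; rewrite !mxE.
exact/Gperm/(eG _ (imageT _ _))/ball_subr_const_mx.
Qed.
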